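(* Let $a\ge b\ge1$ be integers and define $c_j,d_j$ ($j\in\mathbb Z_+$) by $c_0=d_0=0$, $c_1=d_1=1$, $c_{k+2}+c_k=a d_{k+1}$, $d_{k+2}+d_k=b c_{k+1}$. Then the inequalities $$bc_k^2+ad_{k+1}^2-abc_kd_{k+1}+abc_k-2ad_{k+1}+a\le0$$ and $$bc_{k+1}^2+ad_k^2-abd_kc_{k+1}-2bc_{k+1}+abd_k+b\le0$$ hold (1) for all $k\ge1$ if $b\ge2$, and (2) for all $k\ge2$ if $b=1$ and $a\ge5$.
   Context: $\mathbb Z_+=\{0,1,2,\dots\}$. *)

From Stdlib Require Import ZArith.
Open Scope Z_scope.

(* cd a b n = (c_n, c_{n+1}, d_n, d_{n+1}) with
   c_0=d_0=0, c_1=d_1=1, c_{k+2} = a d_{k+1} - c_k, d_{k+2} = b c_{k+1} - d_k. *)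
Fixpoint cd (a b : Z) (n : nat) : Z * Z * Z * Z :=
  match n with
  | O => (0, 1, 0, 1)
  | S m => let '(c0, c1, d0, d1) := cd a b m in
           (c1, a * d1 - c0, d1, b * c1 - d0)
  end.

Definition c (a b : Z) (n : nat) : Z := let '(x, _, _, _) := cd a b n in x.
Definition d (a b : Z) (n : nat) : Z := let '(_, _, x, _) := cd a b n in x.

(** The form Q(x, y) = b x^2 + a y^2 - a b x y is invariant under the
    reflections x |-> a y - x and y |-> b x - y that generate the sequences,
    so Q(c_k, d_(k+1)) and Q(c_(k+1), d_k) are a and b for even k and are
    swapped for odd k.  Modulo this, the two inequalities at k are linear
    lower bounds on p_k = 2 c_(k+1) - a d_k and q_k = 2 d_(k+1) - b c_k.
    When a b >= 4 the sequences are nonnegative and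
    p_(k+2) - p_k = (a b - 4) c_(k+1) >= 0, q_(k+2) - q_k = (a b - 4) d_(k+1) >= 0,
    so the bounds propagate along each parity class.  It remains to check
    them at k = 0, where they are trivial, and at k = 1, where they read
    a + b <= a b, or, when b = 1, at k = 3, where they read
    a + 1 <= a (a - 3). *)

From Stdlib Require Import ZArith Lia.
Open Scope Z_scope.

Lemma nat_ind_add2 (P : nat -> Prop) (m : nat) :
  (forall k, P k -> P (S (S k))) -> P m -> forall n, P (m + 2 * n)%nat.
Proof.
  intros step Pm n; induction n as [|n IHn].
  - now rewrite Nat.add_0_r.
  - replace (m + 2 * S n)%nat with (S (S (m + 2 * n))) by lia.
    now apply step.
Qed.

Definition qform (a b x y : Z) : Z := b * x ^ 2 + a * y ^ 2 - a * b * x * y.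

Lemma qform_reflect_l a b x y : qform a b (a * y - x) y = qform a b x y.
Proof. unfold qform; ring. Qed.

Lemma qform_reflect_r a b x y : qform a b x (b * x - y) = qform a b x y.
Proof. unfold qform; ring. Qed.

Section Recurrence.

Variables a b : Z.

Local Notation C := (c a b).
Local Notation D := (d a b).
Local Notation Q := (qform a b).

Lemma cd_eq k : cd a b k = (C k, C (S k), D k, D (S k)).
Proof. unfold c, d; simpl; destruct (cd a b k) as [[[x y] u] v]; reflexivity. Qed.

Lemma c_SS k : C (S (S k)) = a * D (S k) - C k.
Proof. unfold c at 1; simpl; rewrite cd_eq; reflexivity. Qed.

Lemma d_SS k : D (S (S k)) = b * C (S k) - D k.
Proof. unfold d at 1; simpl; rewrite cd_eq; reflexivity. Qed.

Lemma qform_cd_period2 k :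
  Q (C (S (S k))) (D (S (S (S k)))) = Q (C k) (D (S k)) /\
  Q (C (S (S (S k)))) (D (S (S k))) = Q (C (S k)) (D k).
Proof.
  rewrite (d_SS (S k)), qform_reflect_r, (c_SS k), qform_reflect_l.
  rewrite (c_SS (S k)), qform_reflect_l, (d_SS k), qform_reflect_r.
  split; reflexivity.
Qed.

Definition p k := 2 * C (S k) - a * D k.
Definition q k := 2 * D (S k) - b * C k.

Lemma p_succ k : 2 * p (S k) = a * q k + (a * b - 4) * C k.
Proof. unfold p, q; rewrite c_SS; ring. Qed.

Lemma q_succ k : 2 * q (S k) = b * p k + (a * b - 4) * D k.
Proof. unfold p, q; rewrite d_SS; ring. Qed.

Lemma p_SS k : p (S (S k)) = p k + (a * b - 4) * C (S k).
Proof. unfold p; rewrite c_SS, d_SS; ring. Qed.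

Lemma q_SS k : q (S (S k)) = q k + (a * b - 4) * D (S k).
Proof. unfold q; rewrite d_SS, c_SS; ring. Qed.

Definition cd_bounds k : Prop :=
  Q (C k) (D (S k)) + a <= a * q k /\ Q (C (S k)) (D k) + b <= b * p k.

Lemma cd_ineqs_of_bounds k :
  cd_bounds k ->
  b * C k ^ 2 + a * D (k + 1)%nat ^ 2 - a * b * C k * D (k + 1)%nat
    + a * b * C k - 2 * a * D (k + 1)%nat + a <= 0 /\
  b * C (k + 1)%nat ^ 2 + a * D k ^ 2 - a * b * D k * C (k + 1)%nat
    - 2 * b * C (k + 1)%nat + a * b * D k + b <= 0.
Proof. rewrite Nat.add_1_r; unfold cd_bounds, qform, p, q; lia. Qed.

Hypothesis a_ge0 : 0 <= a.
Hypothesis b_ge0 : 0 <= b.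
Hypothesis ab_ge4 : 4 <= a * b.

Lemma cd_pq_nonneg k : 0 <= C k /\ 0 <= D k /\ 0 <= p k /\ 0 <= q k.
Proof.
  induction k as [|k [Ck [Dk [pk qk]]]].
  - cbv [p q c d cd]; lia.
  - assert (2 * C (S k) = p k + a * D k) by (unfold p; ring).
    assert (2 * D (S k) = q k + b * C k) by (unfold q; ring).
    pose proof (p_succ k); pose proof (q_succ k).
    assert (0 <= a * D k) by now apply Z.mul_nonneg_nonneg.
    assert (0 <= b * C k) by now apply Z.mul_nonneg_nonneg.
    assert (0 <= a * q k) by now apply Z.mul_nonneg_nonneg.
    assert (0 <= b * p k) by now apply Z.mul_nonneg_nonneg.
    assert (0 <= (a * b - 4) * C k) by (apply Z.mul_nonneg_nonneg; lia).
    assert (0 <= (a * b - 4) * D k) by (apply Z.mul_nonneg_nonneg; lia).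
    lia.
Qed.

Lemma cd_bounds_SS k : cd_bounds k -> cd_bounds (S (S k)).
Proof.
  unfold cd_bounds; destruct (qform_cd_period2 k) as [-> ->].
  rewrite p_SS, q_SS.
  destruct (cd_pq_nonneg (S k)) as [Ck [Dk _]].
  assert (0 <= a * ((a * b - 4) * D (S k))) by (apply Z.mul_nonneg_nonneg; nia).
  assert (0 <= b * ((a * b - 4) * C (S k))) by (apply Z.mul_nonneg_nonneg; nia).
  lia.
Qed.

End Recurrence.

Theorem lemma3p5 (a b : Z) :
  a >= b -> b >= 1 ->
  let C := c a b in let D := d a b in
  let P k := b * C k ^ 2 + a * D (k + 1)%nat ^ 2 - a * b * C k * D (k + 1)%nat
             + a * b * C k - 2 * a * D (k + 1)%nat + a <= 0
          /\ b * C (k + 1)%nat ^ 2 + a * D k ^ 2 - a * b * D k * C (k + 1)%nat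
             - 2 * b * C (k + 1)%nat + a * b * D k + b <= 0 in
  (b >= 2 -> forall k : nat, (1 <= k)%nat -> P k) /\
  (b = 1 -> a >= 5 -> forall k : nat, (2 <= k)%nat -> P k).
Proof.
  intros hab hb; cbv beta zeta.
  assert (even_bounds : 4 <= a * b -> forall n, cd_bounds a b (2 * n)).
  { intros hab4; apply (nat_ind_add2 (cd_bounds a b) 0); [apply cd_bounds_SS; lia|].
    cbv [cd_bounds qform p q c d cd]; lia. }
  split.
  - intros hb2 k _; apply cd_ineqs_of_bounds.
    destruct (Nat.Even_or_Odd k) as [[n ->]|[n ->]]; [apply even_bounds; nia|].
    rewrite Nat.add_comm; apply nat_ind_add2; [apply cd_bounds_SS; nia|].
    cbv [cd_bounds qform p q c d cd]; nia.
  - intros -> ha5 k hk; apply cd_ineqs_of_bounds.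
    destruct (Nat.Even_or_Odd k) as [[n ->]|[[|n] ->]]; [apply even_bounds; lia|lia|].
    replace (2 * S n + 1)%nat with (3 + 2 * n)%nat by lia.
    apply nat_ind_add2; [apply cd_bounds_SS; lia|].
    cbv [cd_bounds qform p q c d cd]; nia.
Qed.
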